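(* Let $K$ be either $\mathbb{Q}$ or a quadratic field $\mathbb{Q}[\sqrt{d}]$ with $d\ne 1$ square-free, let $\mathfrak{o}_K$ be its ring of integers and $C_2=\langle g\rangle$. Then the unit group $\mathcal{U}(\mathfrak{o}_K[C_2])$ is trivial (i.e. consists only of the trivial units $ug$, $u\in\mathcal{U}(\mathfrak{o}_K)$, $g\in C_2$) if and only if $K=\mathbb{Q}$ or $K$ is imaginary quadratic, i.e. $d<0$.
   Context: A unit of the group ring $\mathfrak{o}_K[G]$ is called trivial if it is of the form $ug$ with $u\in\mathcal{U}(\mathfrak{o}_K)$ and $g\in G$. *)

From mathcomp Require Import all_boot all_order all_algebra all_field.
Set Implicit Arguments. Unset Strict Implicit. Unset Printing Implicit Defensive.
Import Order.TTheory GRing.Theory Num.Theory.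
Local Open Scope ring_scope.

Definition squarefree_int (d : int) : Prop :=
  d != 0 /\ forall p : nat, prime p -> ~~ (p * p %| `|d|)%N.

(* The field K = Q(sqrt d) inside algC (for d = 1 this is Q itself). *)
Definition inK (d : int) (x : algC) : Prop :=
  exists a b : rat, x = ratr a + ratr b * sqrtC (d%:~R).

Definition inOK (d : int) (x : algC) : Prop := inK d x /\ x \in Aint.

Definition unitOK (d : int) (u : algC) : Prop :=
  inOK d u /\ exists v, inOK d v /\ u * v = 1.

(* The group ring o_K[C_2], C_2 = <g>: the pair (a, b) stands for a + b g.
   Multiplication uses g^2 = 1. *)
Definition gr_mul (x y : algC * algC) : algC * algC :=
  (x.1 * y.1 + x.2 * y.2, x.1 * y.2 + x.2 * y.1).
Definition gr_one : algC * algC := (1, 0).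

Definition in_grOK (d : int) (x : algC * algC) : Prop :=
  inOK d x.1 /\ inOK d x.2.

(* Units of o_K[C_2] (the ring is commutative). *)
Definition gr_unit (d : int) (x : algC * algC) : Prop :=
  in_grOK d x /\ exists y, in_grOK d y /\ gr_mul x y = gr_one.

Definition gr_trivial_unit (d : int) (x : algC * algC) : Prop :=
  exists u, unitOK d u /\ (x = (u, 0) \/ x = (0, u)).

Definition trivial_unit_group (d : int) : Prop :=
  forall x, gr_unit d x -> gr_trivial_unit d x.

From mathcomp Require Import all_boot all_order all_algebra all_field.
From mathcomp Require Import zify ring lra.
Set Implicit Arguments. Unset Strict Implicit. Unset Printing Implicit Defensive.
Import Order.TTheory GRing.Theory Num.Theory.
Local Open Scope ring_scope.

(* Map a + b g in o_K[C_2] to the pair (a + b, a - b) in o_K x o_K: a unit goes to a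
   pair of units of o_K.  When K is Q or imaginary quadratic, |z|^2 is a nonnegative
   integer for z in o_K, so units of o_K have |z|^2 = 1, and the parallelogram law
   gives |a|^2 + |b|^2 = 1; hence a = 0 or b = 0 and the unit is trivial.  When
   d > 1, a solution of Pell's equation x^2 - d y^2 = 1 with y <> 0 yields the
   nontrivial unit x + y sqrt d g, with inverse x - y sqrt d g.  Pell's equation is
   solved classically: Dirichlet's approximation theorem gives infinitely many
   (p, q) with |p^2 - d q^2| <= 2 d, and two of them with the same value k of
   p^2 - d q^2 that are congruent modulo k combine into a solution. *)

Lemma pigeonhole_seq (T U : eqType) (f : T -> U) (s : seq T) (t : seq U) :
  uniq s -> {subset map f s <= t} -> (size t < size s)%N ->
  exists x y, [/\ x \in s, y \in s, x != y & f x = f y].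
Proof.
move=> us sub lt_ts.
have [/hasP [x xs /hasP [y ys /andP [xy /eqP fxy]]] | noc] :=
  boolP (has (fun x => has (fun y => (x != y) && (f x == f y)) s) s).
  by exists x, y.
have f_inj : {in s &, injective f}.
  move=> x y xs ys fxy; apply/eqP; apply: contraNT noc => xy.
  by apply/hasP; exists x => //; apply/hasP; exists y; rewrite // xy fxy eqxx.
have := uniq_leq_size _ sub; rewrite map_inj_in_uniq // size_map => /(_ us).
by rewrite leqNgt lt_ts.
Qed.

Lemma residue_collision (K : int * int -> int) (M : nat) (s : seq (int * int)) :
  uniq s -> ((2 * M + 1) * M * M < size s)%N ->
  (forall x, x \in s -> K x != 0 /\ `|K x| <= M%:Z) ->
  exists x y, [/\ x \in s, y \in s, x != y, K x = K y &
    (x.1 = y.1 %[mod K x])%Z /\ (x.2 = y.2 %[mod K x])%Z].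
Proof.
move=> s_uniq s_size s_K.
pose c x := (absz (K x + M%:Z), absz (x.1 %% K x)%Z, absz (x.2 %% K x)%Z).
pose t := [seq (ij, l) | ij <- [seq (i, j) | i <- iota 0 (2 * M + 1), j <- iota 0 M],
                         l <- iota 0 M].
have sub : {subset map c s <= t}.
  move=> _ /mapP [x xs ->]; have [K_neq0 K_le] := s_K x xs.
  have := modz_ge0 x.1 K_neq0; have := ltz_mod x.1 K_neq0.
  have := modz_ge0 x.2 K_neq0; have := ltz_mod x.2 K_neq0.
  rewrite /c; move: (x.1 %% K x)%Z (x.2 %% K x)%Z => r1 r2.
  move: (K x) K_neq0 K_le => k K_neq0 K_le r2_lt r2_ge r1_lt r1_ge.
  rewrite !allpairs_f // !mem_iota /=; clear -K_neq0 K_le r1_ge r1_lt r2_ge r2_lt; lia.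
have [|x [y [xs ys xy]]] := pigeonhole_seq s_uniq sub.
  by rewrite !size_allpairs !size_iota.
have [K_neq0 K_le] := s_K x xs; have [_ K_le'] := s_K y ys.
case=> e_K e_1 e_2; exists x, y.
have Kxy : K x = K y by move: e_K K_le K_le'; clear; lia.
rewrite -Kxy in e_1 e_2; have := modz_ge0 x.1 K_neq0; have := modz_ge0 y.1 K_neq0.
have := modz_ge0 x.2 K_neq0; have := modz_ge0 y.2 K_neq0.
move: e_1 e_2; move: (x.1 %% K x)%Z (y.1 %% K x)%Z (x.2 %% K x)%Z (y.2 %% K x)%Z.
by move=> r1 r1' r2 r2' *; split=> //; split; lia.
Qed.

Section DiophantineApproximation.

Variable R : archiRealFieldType.
Implicit Types (a x : R).

Definition frac x := x - (Num.floor x)%:~R.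

Lemma frac_ge0 x : 0 <= frac x.
Proof. by rewrite /frac subr_ge0 floor_le. Qed.

Lemma frac_lt1 x : frac x < 1.
Proof. by have := floorD1_gt x; rewrite /frac intrD; lra. Qed.

Lemma floor_eq_dist_lt1 x y : Num.floor x = Num.floor y -> `|x - y| < 1.
Proof.
move=> exy; have /andP [x_ge x_lt] := floor_itv x; have /andP [y_ge y_lt] := floor_itv y.
by move: x_ge x_lt; rewrite exy intrD => x_ge x_lt; rewrite ltr_norml; apply/andP; lra.
Qed.

Lemma frac_mul_diff a (k l : nat) : (k <= l)%N ->
  (l - k)%:Z%:~R * a - (Num.floor (l%:R * a) - Num.floor (k%:R * a))%:~R
  = frac (l%:R * a) - frac (k%:R * a).
Proof. by move=> kl; rewrite /frac intrD intrN -pmulrn natrB //; ring. Qed.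

Lemma approx_of_close_fracs a (N k l : nat) : (k < l <= N)%N ->
  N%:R * `|frac (l%:R * a) - frac (k%:R * a)| < 1 ->
  exists p q : int, [/\ 0 < q, q <= N%:Z & N%:R * `|q%:~R * a - p%:~R| < 1].
Proof.
move=> /andP [lt_kl le_lN] close.
exists (Num.floor (l%:R * a) - Num.floor (k%:R * a)), (l - k)%:Z.
rewrite frac_mul_diff ?(ltnW lt_kl) // ltz_nat subn_gt0 lt_kl lez_nat.
by split=> //; apply: leq_trans (leq_subr _ _) le_lN.
Qed.

Theorem dirichlet_approximation a (N : nat) : (0 < N)%N ->
  exists p q : int, [/\ 0 < q, q <= N%:Z & N%:R * `|q%:~R * a - p%:~R| < 1].
Proof.
move=> N_gt0.
pose fl (k : nat) := Num.floor (N%:R * frac (k%:R * a)).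
have fl_ge0 k : 0 <= fl k by rewrite floor_ge0 mulr_ge0 ?frac_ge0.
have fl_lt k : fl k < N%:Z.
  rewrite floor_lt_int -[X in _ < X]mulr1 pmulrn.
  by rewrite ltr_pM2l ?ltr0n // frac_lt1.
have sub : {subset map (absz \o fl) (iota 0 N.+1) <= iota 0 N}.
  by move=> _ /mapP [k _ ->]; rewrite mem_iota add0n /=; move: (fl_ge0 k) (fl_lt k); lia.
have [|k [l [kN lN kl flkl]]] := pigeonhole_seq (iota_uniq 0 N.+1) sub.
  by rewrite !size_iota.
have {}flkl : fl k = fl l.
  by move: flkl (fl_ge0 k) (fl_ge0 l) => /=; move: (fl k) (fl l) => x y; lia.
have close k' l' : fl k' = fl l' -> N%:R * `|frac (l'%:R * a) - frac (k'%:R * a)| < 1.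
  move=> e; rewrite -[N%:R]ger0_norm ?ler0n // -normrM mulrBr.
  by rewrite distrC; apply: floor_eq_dist_lt1.
rewrite !mem_iota /= in kN lN.
case: (ltngtP k l) kl => // [lt_kl | lt_lk] _.
- by apply: (@approx_of_close_fracs _ N k l); [lia | apply: close].
- by apply: (@approx_of_close_fracs _ N l k); [lia | apply: close].
Qed.

End DiophantineApproximation.

Section SqrtApproximation.

Variables (R : archiRealFieldType) (a : R) (d : int).
Hypotheses (a_ge0 : 0 <= a) (sqr_a : a ^+ 2 = d%:~R) (d_ge1 : 1 <= d).

Lemma sqrt_approx_norm_bound (p q : int) (N : nat) : 0 < q -> q <= N%:Z ->
  N%:R * `|q%:~R * a - p%:~R| < 1 -> `|p ^+ 2 - d * q ^+ 2| <= 2 * d.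
Proof.
move=> q_gt0 le_qN close.
have a_ge1 : 1 <= a by rewrite -(expr_ge1 (n := 2)) // sqr_a ler1z.
have a_le_d : a <= d%:~R by rewrite -sqr_a expr2; nra.
have q_ge1 : (1 : R) <= q%:~R by rewrite ler1z.
have le_qN' : (q%:~R : R) <= N%:R by rewrite -[N%:R]/((N%:Z)%:~R) ler_int.
pose t : R := `|q%:~R * a - p%:~R|.
have t_ge0 : 0 <= t := normr_ge0 _.
have qt_lt1 : q%:~R * t < 1 by rewrite -/t in close; nra.
have norm_lt : `|(p ^+ 2 - d * q ^+ 2)%:~R| < 1 + 2 * d%:~R :> R.
  have -> : (p ^+ 2 - d * q ^+ 2)%:~R = (p%:~R - q%:~R * a) * (p%:~R + q%:~R * a) :> R.
    by rewrite intrB intrM !rmorphXn /= -sqr_a; ring.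
  rewrite normrM distrC -/t.
  have : `|p%:~R + q%:~R * a| <= t + 2 * q%:~R * a.
    have -> : p%:~R + q%:~R * a = - (q%:~R * a - p%:~R) + 2 * q%:~R * a :> R by ring.
    apply: le_trans (ler_normD _ _) _.
    by rewrite normrN -/t lerD2l ger0_norm // !mulr_ge0 // (le_trans ler01).
  nra.
have : `|p ^+ 2 - d * q ^+ 2| < 1 + 2 * d.
  by rewrite -(ltr_int R) intr_norm [X in _ < X]intrD intrM.
lia.
Qed.

Hypothesis d_not_square : forall p q : int, q != 0 -> p ^+ 2 != d * q ^+ 2.

Lemma sqrt_approx_err_gt0 (p q : int) : q != 0 -> 0 < `|q%:~R * a - p%:~R|.
Proof.
move=> q_neq0; rewrite normr_gt0 subr_eq0; apply: contra (d_not_square p q_neq0).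
by move=> /eqP qa_p; apply/eqP/(@intr_inj R); rewrite !expr2 !intrM -qa_p -sqr_a expr2; ring.
Qed.

Lemma approx_err_lower_bound (s : seq (int * int)) :
  (forall x, x \in s -> x.2 != 0) ->
  exists N : nat, (0 < N)%N /\ forall x, x \in s -> 1 <= N%:R * `|x.2%:~R * a - x.1%:~R|.
Proof.
elim: s => [|x s IHs] s_neq0; first by exists 1%N.
have [|N [N_gt0 HN]] := IHs; first by move=> y ys; apply: s_neq0; rewrite in_cons ys orbT.
have err_gt0 := sqrt_approx_err_gt0 x.1 (s_neq0 x (mem_head _ _)).
set err := `|_| in err_gt0.
pose M := Num.bound err^-1.
have M_ge : 1 <= M%:R * err.
  by rewrite -ler_pdivrMr // mul1r ltW // archi_boundP // invr_ge0 ltW.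
exists (M + N)%N; split; first by rewrite addn_gt0 N_gt0 orbT.
move=> y; rewrite in_cons natrD mulrDl => /predU1P [-> | ys].
  by apply: le_trans M_ge _; rewrite lerDl mulr_ge0.
by apply: le_trans (HN y ys) _; rewrite lerDr mulr_ge0.
Qed.

Lemma small_norm_seq (n : nat) : exists s : seq (int * int), [/\ uniq s, size s = n &
  forall x, x \in s -> 0 < x.2 /\ `|x.1 ^+ 2 - d * x.2 ^+ 2| <= 2 * d].
Proof.
elim: n => [|n [s [s_uniq s_size s_small]]]; first by exists [::].
have [|N [N_gt0 HN]] := @approx_err_lower_bound s.
  by move=> x /s_small [x2_gt0 _]; rewrite gt_eqF.
have [p [q [q_gt0 le_qN close]]] := dirichlet_approximation a N_gt0.
exists ((p, q) :: s); split; [|by rewrite /= s_size|].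
- by rewrite /= s_uniq andbT; apply: contraTN close => /HN; rewrite leNgt.
- move=> x /predU1P [-> | /s_small //].
  by split=> //; apply: sqrt_approx_norm_bound close.
Qed.

End SqrtApproximation.

Section PellEquation.

Variable d : int.

Lemma brahmagupta_identity (p1 q1 p2 q2 : int) :
  (p1 ^+ 2 - d * q1 ^+ 2) * (p2 ^+ 2 - d * q2 ^+ 2)
  = (p1 * p2 - d * q1 * q2) ^+ 2 - d * (p1 * q2 - p2 * q1) ^+ 2.
Proof. ring. Qed.

Lemma same_norm_cross_eq0 (p1 q1 p2 q2 : int) :
  p1 ^+ 2 - d * q1 ^+ 2 = p2 ^+ 2 - d * q2 ^+ 2 -> p1 ^+ 2 - d * q1 ^+ 2 != 0 ->
  0 < q1 -> 0 < q2 -> p1 * q2 = p2 * q1 -> (p1, q1) = (p2, q2).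
Proof.
move=> e_norm norm_neq0 q1_gt0 q2_gt0 cross.
have : (p1 ^+ 2 - d * q1 ^+ 2) * (q2 ^+ 2 - q1 ^+ 2) = 0.
  have -> : (p1 ^+ 2 - d * q1 ^+ 2) * (q2 ^+ 2 - q1 ^+ 2)
          = (p1 * q2) ^+ 2 - d * q1 ^+ 2 * q2 ^+ 2 - (p2 ^+ 2 - d * q2 ^+ 2) * q1 ^+ 2.
    by rewrite -e_norm; ring.
  by rewrite cross; ring.
move/eqP; rewrite mulf_eq0 (negbTE norm_neq0) /= subr_eq0 eqf_sqr => /orP [/eqP q12 | /eqP q12].
  by move: cross; rewrite q12 => /(mulIf (lt0r_neq0 q1_gt0)) ->.
by move: q1_gt0 q2_gt0; rewrite q12; lia.
Qed.

(* The congruences make [(p1 + q1 sqrt d) (p2 - q2 sqrt d) / k] integral, of norm 1. *)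
Lemma pell_of_congruent_solutions (p1 q1 p2 q2 k : int) : k != 0 ->
  p1 ^+ 2 - d * q1 ^+ 2 = k -> p2 ^+ 2 - d * q2 ^+ 2 = k ->
  (p1 = p2 %[mod k])%Z -> (q1 = q2 %[mod k])%Z -> 0 < q1 -> 0 < q2 ->
  (p1, q1) != (p2, q2) -> exists x y : int, y != 0 /\ x ^+ 2 - d * y ^+ 2 = 1.
Proof.
move=> k_neq0 norm1 norm2 /eqP + /eqP; rewrite !eqz_mod_dvd.
move=> /dvdzP [u p12] /dvdzP [v q12] q1_gt0 q2_gt0 neq.
have p2E : p2 = p1 - u * k by rewrite -p12; ring.
have q2E : q2 = q1 - v * k by rewrite -q12; ring.
have /dvdzP [x Hx] : (k %| p1 * p2 - d * q1 * q2)%Z.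
  apply/dvdzP; exists (1 - p1 * u + d * q1 * v).
  rewrite p2E q2E; transitivity ((p1 ^+ 2 - d * q1 ^+ 2) - p1 * u * k + d * q1 * v * k).
    by ring.
  by rewrite norm1; ring.
have /dvdzP [y Hy] : (k %| p1 * q2 - p2 * q1)%Z.
  by apply/dvdzP; exists (q1 * u - p1 * v); rewrite p2E q2E; ring.
exists x, y; split.
  apply: contraNneq neq => y0.
  apply/eqP; apply: same_norm_cross_eq0 q1_gt0 q2_gt0 _; rewrite ?norm1 ?norm2 //.
  by apply/eqP; rewrite -subr_eq0 Hy y0 mul0r.
apply: (mulIf (expf_neq0 2 k_neq0)); rewrite mul1r.
have -> : (x ^+ 2 - d * y ^+ 2) * k ^+ 2 = (x * k) ^+ 2 - d * (y * k) ^+ 2 by ring.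
by rewrite -Hx -Hy -brahmagupta_identity norm1 norm2 expr2.
Qed.

End PellEquation.

Lemma pell_of_irrational_sqrt (R : archiRealFieldType) (a : R) (d : int) :
  0 <= a -> a ^+ 2 = d%:~R -> 1 <= d ->
  (forall p q : int, q != 0 -> p ^+ 2 != d * q ^+ 2) ->
  exists x y : int, y != 0 /\ x ^+ 2 - d * y ^+ 2 = 1.
Proof.
move=> a_ge0 sqr_a d_ge1 d_not_square.
pose M := absz (2 * d); pose pnorm (x : int * int) := x.1 ^+ 2 - d * x.2 ^+ 2.
have [s [s_uniq s_size s_small]] :=
  small_norm_seq a_ge0 sqr_a d_ge1 d_not_square ((2 * M + 1) * M * M).+1.
have s_norm x : x \in s -> pnorm x != 0 /\ `|pnorm x| <= M%:Z.
  move=> /s_small [x2_gt0 norm_le]; split.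
    by rewrite subr_eq0 d_not_square ?gt_eqF.
  by apply: le_trans norm_le _; rewrite /M; move: d_ge1; clear; lia.
have [|[p1 q1] [[p2 q2] [xs ys neq e_norm [e_1 e_2]]]] := residue_collision s_uniq _ s_norm.
  by rewrite s_size.
have [norm_neq0 _] := s_norm _ xs.
have [[q1_gt0 _] [q2_gt0 _]] := (s_small _ xs, s_small _ ys).
exact: pell_of_congruent_solutions norm_neq0 (erefl _) (esym e_norm) e_1 e_2 q1_gt0 q2_gt0 neq.
Qed.

Lemma squarefree_not_square (d : int) : squarefree_int d -> 1 < d ->
  forall p q : int, q != 0 -> p ^+ 2 != d * q ^+ 2.
Proof.
move=> [d_neq0 d_sqf] d_gt1 p q q_neq0; apply/eqP => e.
have e_nat : (absz p ^ 2 = absz d * absz q ^ 2)%N by rewrite -!abszX -abszM e.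
have absd_gt1 : (1 < absz d)%N by lia.
pose r := pdiv (absz d).
have r_prime : prime r := pdiv_prime absd_gt1.
have q_gt0 : (0 < absz q)%N by rewrite absz_gt0.
have logd_gt0 : (0 < logn r (absz d))%N.
  by rewrite logn_gt0 mem_primes r_prime pdiv_dvd; lia.
have logd_lt2 : (logn r (absz d) < 2)%N by rewrite ltnNge -pfactor_dvdn ?d_sqf //; lia.
have := congr1 (logn r) e_nat.
rewrite lognM ?expn_gt0 ?q_gt0 //; last by lia.
by rewrite !lognX; lia.
Qed.

Lemma pell_solution (d : int) : squarefree_int d -> 1 < d ->
  exists x y : int, y != 0 /\ x ^+ 2 - d * y ^+ 2 = 1.
Proof.
move=> d_sqf d_gt1; apply: (@pell_of_irrational_sqrt algR (Num.sqrt d%:~R)).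
- exact: sqrtr_ge0.
- by rewrite sqr_sqrtr // ler0z; lia.
- lia.
- exact: squarefree_not_square.
Qed.

Lemma natr_mul_eq1 (R : archiNumDomainType) (a b : R) :
  a \is a Num.nat -> b \is a Num.nat -> a * b = 1 -> a = 1.
Proof.
move=> /natrP [m ->] /natrP [n ->] /eqP; rewrite -natrM pnatr_eq1 muln_eq1.
by case/andP=> /eqP ->.
Qed.

Lemma natr_add_eq1 (R : archiNumDomainType) (a b : R) :
  a \is a Num.nat -> b \is a Num.nat -> a + b = 1 -> a = 0 \/ b = 0.
Proof.
move=> /natrP [m ->] /natrP [n ->] /eqP; rewrite -natrD pnatr_eq1.
by case: m => [|[|//]]; [left | case: n => //; right].
Qed.

Lemma normC_parallelogram (C : numClosedFieldType) (x y : C) :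
  `|x + y| ^+ 2 + `|x - y| ^+ 2 = 2 * (`|x| ^+ 2 + `|y| ^+ 2).
Proof. by rewrite !normCK rmorphB rmorphD /=; ring. Qed.

Section QuadraticIntegers.

Variable d : int.

Let s := sqrtC (d%:~R : algC).

Lemma inK_add x y : inK d x -> inK d y -> inK d (x + y).
Proof. by move=> [a1 [b1 ->]] [a2 [b2 ->]]; exists (a1 + a2), (b1 + b2); rewrite !rmorphD; ring. Qed.

Lemma inK_opp x : inK d x -> inK d (- x).
Proof. by move=> [a [b ->]]; exists (- a), (- b); rewrite !rmorphN; ring. Qed.

Lemma inOK_add x y : inOK d x -> inOK d y -> inOK d (x + y).
Proof. by move=> [Kx Ax] [Ky Ay]; split; [apply: inK_add | apply: rpredD]. Qed.

Lemma inOK_sub x y : inOK d x -> inOK d y -> inOK d (x - y).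
Proof. by move=> [Kx Ax] [Ky Ay]; split; [apply/inK_add/inK_opp | apply: rpredB]. Qed.

Lemma sqrtC_int_Aint : s \in Aint.
Proof.
apply: (@root_monic_Aint ('X^2 - (d%:~R)%:P)).
- by rewrite /root !hornerE sqrtCK subrr.
- exact: monicXnsubC.
- by rewrite polyOverXnsubC intr_int.
Qed.

Lemma inOK_int (x : int) : inOK d x%:~R.
Proof.
split; last exact: Aint_int.
by exists x%:~R, 0; rewrite ratr_int rmorph0 mul0r addr0.
Qed.

Lemma inOK_int_sqrt (y : int) : inOK d (y%:~R * s).
Proof.
split; last by rewrite rpredM ?Aint_int ?sqrtC_int_Aint.
by exists 0, y%:~R; rewrite ratr_int rmorph0 add0r.
Qed.

Lemma pell_gr_unit (x y : int) : x ^+ 2 - d * y ^+ 2 = 1 -> gr_unit d (x%:~R, y%:~R * s).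
Proof.
move=> pell; split; first by split; [apply: inOK_int | apply: inOK_int_sqrt].
exists (x%:~R, (- y)%:~R * s); split; first by split; [apply: inOK_int | apply: inOK_int_sqrt].
rewrite /gr_mul /gr_one /= intrN; congr (_, _); last by ring.
have -> : x%:~R * x%:~R + y%:~R * s * (- y%:~R * s) = x%:~R ^+ 2 - y%:~R ^+ 2 * s ^+ 2.
  by ring.
transitivity ((x ^+ 2 - d * y ^+ 2)%:~R : algC); last by rewrite pell.
by rewrite sqrtCK intrB intrM !expr2 !intrM; ring.
Qed.

Lemma pell_gr_unit_nontrivial (x y : int) : 0 < d -> y != 0 -> x ^+ 2 - d * y ^+ 2 = 1 ->
  ~ gr_trivial_unit d (x%:~R, y%:~R * s).
Proof.
move=> d_gt0 y_neq0 pell [u [_ [[_ ys0] | [x0 _]]]].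
  move/eqP: ys0; rewrite mulf_eq0 intr_eq0 (negbTE y_neq0) /= => /eqP s0.
  by move: (sqrtCK (d%:~R : algC)); rewrite -/s s0 expr0n /= => /eqP; rewrite eq_sym intr_eq0 gt_eqF.
move/eqP: x0; rewrite intr_eq0 => /eqP x0.
have : 0 <= d * y ^+ 2 by rewrite mulr_ge0 ?sqr_ge0 ?ltW.
by move: pell; rewrite x0 expr0n /= sub0r; lia.
Qed.

Lemma conj_sqrtC_neg : d < 0 -> s^* = - s.
Proof.
move=> d_lt0.
have sqr_conj : s^* ^+ 2 = s ^+ 2 by rewrite -rmorphXn /= sqrtCK conj_intr ?rpred_int.
move/eqP: sqr_conj; rewrite eqf_sqr => /orP [/eqP s_real | /eqP //].
have : 0 <= s * s^* by rewrite -normCK exprn_ge0.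
by rewrite s_real -expr2 sqrtCK ler0z leNgt d_lt0.
Qed.

Hypothesis d_imaginary : d = 1 \/ d < 0.

Lemma inK_sqr_norm_rat z : inK d z -> `|z| ^+ 2 \in Crat.
Proof.
move=> [a [b ->]]; move: (ratr a) (ratr b) (Crat_rat a) (Crat_rat b) => A B A_rat B_rat.
rewrite normCK rmorphD rmorphM /= (conj_Crat A_rat) (conj_Crat B_rat).
case: d_imaginary => [d1 | /conj_sqrtC_neg ->].
  by rewrite /s d1 sqrtC1 conjC1 !mulr1 rpredM ?rpredD.
have -> : (A + B * s) * (A + B * - s) = A ^+ 2 - B ^+ 2 * s ^+ 2 by ring.
by rewrite sqrtCK rpredB ?rpredM ?rpredX ?rpred_int.
Qed.

Lemma inOK_sqr_norm_nat z : inOK d z -> `|z| ^+ 2 \is a Num.nat.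
Proof.
move=> [Kz Az]; rewrite natrEint exprn_ge0 // andbT.
by apply: Cint_rat_Aint (inK_sqr_norm_rat Kz) _; rewrite normCK rpredM ?Aint_aut.
Qed.

Lemma inOK_unit_sqr_norm x y : inOK d x -> inOK d y -> x * y = 1 -> `|x| ^+ 2 = 1.
Proof.
move=> OKx OKy xy1; apply: natr_mul_eq1 (inOK_sqr_norm_nat OKx) (inOK_sqr_norm_nat OKy) _.
by rewrite -exprMn -normrM xy1 normr1 expr1n.
Qed.

Lemma trivial_unit_group_imaginary : trivial_unit_group d.
Proof.
move=> [a b] [[/= OKa OKb] [[c e] [[/= OKc OKe]]]].
rewrite /gr_mul /gr_one /= => -[ac_be ae_bc].
have sum_unit : `|a + b| ^+ 2 = 1.
  apply: inOK_unit_sqr_norm (inOK_add OKa OKb) (inOK_add OKc OKe) _.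
  by rewrite -ac_be -[RHS]addr0 -ae_bc; ring.
have diff_unit : `|a - b| ^+ 2 = 1.
  apply: inOK_unit_sqr_norm (inOK_sub OKa OKb) (inOK_sub OKc OKe) _.
  by rewrite -ac_be -[RHS]subr0 -ae_bc; ring.
have : `|a| ^+ 2 + `|b| ^+ 2 = 1.
  apply: (@mulfI _ 2); first by rewrite pnatr_eq0.
  by rewrite -normC_parallelogram sum_unit diff_unit mulr1.
case/(natr_add_eq1 (inOK_sqr_norm_nat OKa) (inOK_sqr_norm_nat OKb)).
  move/eqP; rewrite sqrf_eq0 normr_eq0 => /eqP a0; exists b; split; last by right; rewrite a0.
  by split=> //; exists e; split=> //; rewrite -ac_be a0 mul0r add0r.
move/eqP; rewrite sqrf_eq0 normr_eq0 => /eqP b0; exists a; split; last by left; rewrite b0.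
by split=> //; exists c; split=> //; rewrite -ac_be b0 mul0r addr0.
Qed.

End QuadraticIntegers.

Theorem mainTheorem6 (d : int) (hd : squarefree_int d) :
  trivial_unit_group d <-> (d = 1 \/ d < 0).
Proof.
split; last exact: trivial_unit_group_imaginary.
move=> trivial; have [d_lt0 | d_ge0] := ltP d 0; first by right.
have [d1 | d_neq1] := eqVneq d 1; first by left.
have d_gt1 : 1 < d by case: hd => d_neq0 _; lia.
have [x [y [y_neq0 pell]]] := pell_solution hd d_gt1.
by case: (pell_gr_unit_nontrivial (lt_trans ltr01 d_gt1) y_neq0 pell); apply/trivial/pell_gr_unit.
Qed.
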